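(* Let $G=(V,E,s_0,s_1)$ be a switch graph and $o,d\in V$ with $o\neq d$. If $\textsc{Run}(G,o,d)$ does not terminate, then it reaches a dead end (i.e., at some point the current vertex $v$ of the run is a dead end).
   Context: A switch graph is a 4-tuple $G=(V,E,s_0,s_1)$ where $V$ is a finite vertex set, $s_0,s_1:V\to V$, and $E=\{(v,s_0(v)):v\in V\}\cup\{(v,s_1(v)):v\in V\}$ (loops allowed; possibly $s_0(v)=s_1(v)$). The procedure $\textsc{Run}(G,o,d)$: maintain arrays $\mathtt{s\_curr},\mathtt{s\_next}$ indexed by $V$, initially $\mathtt{s\_curr}[v]=s_0(v)$, $\mathtt{s\_next}[v]=s_1(v)$; set $v:=o$; while $v\neq d$: $w:=\mathtt{s\_curr}[v]$, swap $\mathtt{s\_curr}[v],\mathtt{s\_next}[v]$, $v:=w$ (traversing edge $(v,w)$). A dead end is a vertex from which there is no directed path to $d$ in the directed graph $(V,E)$. *)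

From mathcomp Require Import all_boot.
Set Implicit Arguments. Unset Strict Implicit. Unset Printing Implicit Defensive.

(* A switch graph G = (V, E, s0, s1) is given by a finite type V and the two
   successor functions s0 s1 : V -> V; E is determined by them. *)
Definition sw_edge (V : finType) (s0 s1 : V -> V) : rel V :=
  fun v w => (w == s0 v) || (w == s1 v).

Definition dead_end (V : finType) (s0 s1 : V -> V) (d v : V) : bool :=
  ~~ connect (sw_edge s0 s1) v d.

Record run_state (V : Type) := RunState {
  rs_pos : V;
  rs_curr : V -> V;
  rs_next : V -> V }.

(* One iteration of the while loop; a state at d is left unchanged
   (the loop has stopped). *)
Definition run_step (V : finType) (d : V) (st : run_state V) : run_state V :=
  let v := rs_pos st in
  if v == d then st else
  let w := rs_curr st v in
  RunState w
    (fun u => if u == v then rs_next st u else rs_curr st u)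
    (fun u => if u == v then rs_curr st u else rs_next st u).

Definition run_init (V : finType) (s0 s1 : V -> V) (o : V) : run_state V :=
  RunState o s0 s1.

Definition run_after (V : finType) (s0 s1 : V -> V) (o d : V) (n : nat)
  : run_state V := iter n (run_step d) (run_init s0 s1 o).

Definition run_terminates (V : finType) (s0 s1 : V -> V) (o d : V) : Prop :=
  exists n, rs_pos (run_after s0 s1 o d n) = d.

(* If the run never reaches d, then, V being finite, some vertex v is visited
   infinitely often.  Between two consecutive visits of v its switch is left
   untouched, so consecutive visits leave v alternately towards s_0(v) and
   s_1(v): both successors of v are visited infinitely often as well.  Hence
   every vertex reachable from v is visited infinitely often; since d is never
   visited, v cannot reach d, i.e. v is a dead end. *)

From Stdlib Require Import Classical.
From mathcomp Require Import all_boot zify.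

Set Implicit Arguments. Unset Strict Implicit. Unset Printing Implicit Defensive.

Definition recurrent (T : Type) (f : nat -> T) (x : T) : Prop :=
  forall M, exists2 n, M <= n & f n = x.

Lemma exists_recurrent (T : finType) (f : nat -> T) : exists x, recurrent f x.
Proof.
apply: NNPP => none.
have eventually_avoided x : exists M, forall n, M <= n -> f n <> x.
  apply: NNPP => unbounded; apply: none; exists x => M.
  apply: NNPP => late; apply: unbounded; exists M => n leMn fnx.
  by apply: late; exists n.
have [M avoid] := fin_all_exists eventually_avoided.
exact: (avoid (f (\max_x M x)) _ (leq_bigmax _)).
Qed.

Section NonterminatingRun.

Variables (V : finType) (s0 s1 : V -> V) (o d : V).

Local Notation pos n := (rs_pos (run_after s0 s1 o d n)).
Local Notation curr n := (rs_curr (run_after s0 s1 o d n)).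
Local Notation next n := (rs_next (run_after s0 s1 o d n)).

Hypothesis pos_neq_d : forall n, pos n <> d.

Lemma run_afterS n :
  run_after s0 s1 o d n.+1 =
  RunState (curr n (pos n))
    (fun u => if u == pos n then next n u else curr n u)
    (fun u => if u == pos n then curr n u else next n u).
Proof.
rewrite /run_after iterS -/(run_after s0 s1 o d n) /run_step.
by rewrite (introF eqP (@pos_neq_d n)).
Qed.

Lemma posS n : pos n.+1 = curr n (pos n).
Proof. by rewrite run_afterS. Qed.

Lemma currS n u : curr n.+1 u = if u == pos n then next n u else curr n u.
Proof. by rewrite run_afterS. Qed.

Lemma nextS n u : next n.+1 u = if u == pos n then curr n u else next n u.
Proof. by rewrite run_afterS. Qed.

Lemma curr_next_switch n u :
  (curr n u = s0 u /\ next n u = s1 u) \/ (curr n u = s1 u /\ next n u = s0 u).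
Proof.
elim: n => [|n IH]; first by left.
rewrite currS nextS; case: (u == pos n) => //.
by case: IH => -[-> ->]; [right | left].
Qed.

Lemma sw_edge_curr_next n v w :
  sw_edge s0 s1 v w -> w = curr n v \/ w = next n v.
Proof.
by case/orP=> /eqP ->; case: (curr_next_switch n v) => -[-> ->]; tauto.
Qed.

Lemma curr_unvisited a k v :
  (forall j, a <= j < a + k -> pos j <> v) -> curr (a + k) v = curr a v.
Proof.
elim: k => [|k IH] unvisited; first by rewrite addn0.
rewrite addnS currS (introF eqP (fun e => unvisited (a + k) _ (esym e))); last lia.
by apply: IH => j jak; apply: unvisited; lia.
Qed.

Local Notation recurrent_pos := (recurrent (fun n => pos n)).

Lemma next_visit v n :
  recurrent_pos v -> pos n = v ->
  exists2 m, n < m & pos m = v /\ curr m v = next n v.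
Proof.
move=> rec_v pos_n.
have later_visit : exists m, (n < m) && (pos m == v).
  by have [m ltnm pos_m] := rec_v n.+1; exists m; rewrite ltnm pos_m eqxx.
case: (ex_minnP later_visit) => m /andP [ltnm /eqP pos_m] first_visit.
exists m => //; split => //.
rewrite -(subnKC ltnm) curr_unvisited; first by rewrite currS pos_n eqxx.
move=> j /andP [ltnj ltjm] pos_j.
by have := first_visit j; rewrite ltnj pos_j eqxx => /(_ isT); lia.
Qed.

Lemma recurrent_sw_edge v w :
  recurrent_pos v -> sw_edge s0 s1 v w -> recurrent_pos w.
Proof.
move=> rec_v vw M; have [n leMn pos_n] := rec_v M.
have [m ltnm [pos_m curr_m]] := next_visit rec_v pos_n.
case: (sw_edge_curr_next n vw) => ->.
- by exists n.+1; [lia | rewrite posS pos_n].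
- by exists m.+1; [lia | rewrite posS pos_m curr_m].
Qed.

Lemma recurrent_connect v w :
  recurrent_pos v -> connect (sw_edge s0 s1) v w -> recurrent_pos w.
Proof.
move=> rec_v /connectP [p]; elim: p v rec_v => [|x p IH] v rec_v /=.
  by move=> _ ->.
by case/andP=> vx px; apply: IH px; apply: recurrent_sw_edge vx.
Qed.

Lemma d_not_recurrent : ~ recurrent_pos d.
Proof. by move=> /(_ 0) [n _]; apply: pos_neq_d. Qed.

End NonterminatingRun.

Theorem lemma3 (V : finType) (s0 s1 : V -> V) (o d : V) :
  o <> d ->
  ~ run_terminates s0 s1 o d ->
  exists n, dead_end s0 s1 d (rs_pos (run_after s0 s1 o d n)).
Proof.
move=> _ nonterminating.
have pos_neq_d n : rs_pos (run_after s0 s1 o d n) <> d.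
  by move=> at_d; apply: nonterminating; exists n.
have [v rec_v] := exists_recurrent (fun n => rs_pos (run_after s0 s1 o d n)).
have [n _ pos_n] := rec_v 0.
exists n; rewrite pos_n; apply/negP => reaches_d.
exact: d_not_recurrent pos_neq_d (recurrent_connect pos_neq_d rec_v reaches_d).
Qed.
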